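(* Let $N, M, K$ be positive integers, let $\mathbf{a} \in \mathbb{C}^{N}$ and $\mathbf{B} \in \mathbb{C}^{N \times M}$ be constants, and write $\mathbf{A} = \mathrm{diag}(\mathbf{a})$. For a diagonal matrix $\mathbf{X} \in \mathbb{C}^{N \times N}$ write $\mathbf{x} = \mathrm{diag}(\mathbf{X}) \in \mathbb{C}^N$ for its vector of diagonal entries. Fix a diagonal matrix $\mathbf{X}_0 \in \mathbb{C}^{N\times N}$ with $\mathbf{x}_0 = \mathrm{diag}(\mathbf{X}_0)$ and a matrix $\mathbf{Y}_0 \in \mathbb{C}^{M \times K}$. Define, for diagonal $\mathbf{X} \in \mathbb{C}^{N\times N}$ and $\mathbf{Y} \in \mathbb{C}^{M \times K}$, \[ \begin{aligned} \Omega_{\mathbf{a},\mathbf{B}}(\mathbf{X},\mathbf{X}_0,\mathbf{Y},\mathbf{Y}_0) \triangleq\ & \Re\Big\{ \big(\mathbf{Y}_0\mathbf{Y}_0^{\mathsf H}\mathbf{B}^{\mathsf H}\mathbf{A}^*\mathbf{x}_0^* + \mathbf{B}^{\mathsf H}\mathbf{A}^*\mathbf{x}_0^*\big)^{\mathsf H}\big(\mathbf{Y}\mathbf{Y}_0^{\mathsf H}\mathbf{B}^{\mathsf H}\mathbf{A}^*\mathbf{x}_0^* + \mathbf{B}^{\mathsf H}\mathbf{A}^*\mathbf{x}^*\big)\Big\} \\ & - \tfrac{1}{2}\big\|\mathbf{Y}\mathbf{Y}_0^{\mathsf H}\mathbf{B}^{\mathsf H}\mathbf{A}^*\mathbf{x}_0^*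 - \mathbf{B}^{\mathsf H}\mathbf{A}^*\mathbf{x}^*\big\|_2^2 - \big\|\mathbf{Y}_0^{\mathsf H}\mathbf{B}^{\mathsf H}\mathbf{A}^*\mathbf{x}_0^*\big\|_2^2 \\ & - \tfrac{1}{2}\big\|\mathbf{Y}_0\mathbf{Y}_0^{\mathsf H}\mathbf{B}^{\mathsf H}\mathbf{A}^*\mathbf{x}_0^* + \mathbf{B}^{\mathsf H}\mathbf{A}^*\mathbf{x}_0^*\big\|_2^2 . \end{aligned} \] Then $\Omega_{\mathbf{a},\mathbf{B}}(\cdot,\mathbf{X}_0,\cdot,\mathbf{Y}_0)$ is jointly concave in $(\mathbf{X},\mathbf{Y})$ (viewed as a real-valued function of the real and imaginary parts of the entries of $\mathbf{x}$ and $\mathbf{Y}$), and for every diagonal $\mathbf{X} \in \mathbb{C}^{N\times N}$ and every $\mathbf{Y} \in \mathbb{C}^{M\times K}$, \[ \|\mathbf{a}^{\mathsf T}\mathbf{X}\mathbf{B}\mathbf{Y}\|_2^2 \ \ge\ \Omega_{\mathbf{a},\mathbf{B}}(\mathbf{X},\mathbf{X}_0,\mathbf{Y},\mathbf{Y}_0). \]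
   Context: $(\cdot)^*$ denotes entrywise complex conjugation, $(\cdot)^{\mathsf T}$ transpose, $(\cdot)^{\mathsf H}$ conjugate transpose, $\|\cdot\|_2$ the Euclidean norm, $\Re\{\cdot\}$ the real part. For a vector $\mathbf{v}$, $\mathrm{diag}(\mathbf{v})$ is the diagonal matrix with $\mathbf{v}$ on its diagonal; for a diagonal matrix, $\mathrm{diag}(\cdot)$ is the vector of its diagonal entries. (In the paper this bound is written compactly via $\boldsymbol{\alpha}_{\mathbf{a},\mathbf{B}}(\mathbf{Z}_1,\mathbf{Z}_2,\mathbf{Z}_3,\mathbf{Z}_4) = \mathbf{Z}_3\mathbf{Z}_4^{\mathsf H}\mathbf{B}^{\mathsf H}\mathrm{diag}(\mathbf{a}^* )\mathrm{diag}(\mathbf{Z}_2^* ) + \mathbf{B}^{\mathsf H}\mathrm{diag}(\mathbf{a}^* )\mathrm{diag}(\mathbf{Z}_1^* )$ as $\Re\{\boldsymbol{\alpha}^{\mathsf H}(\mathbf{X}_0,\mathbf{X}_0,\mathbf{Y}_0,\mathbf{Y}_0)\boldsymbol{\alpha}(\mathbf{X},\mathbf{X}_0,\mathbf{Y},\mathbf{Y}_0)\} - \tfrac12\|\boldsymbol{\alpha}(-\mathbf{X},\mathbf{X}_0,\mathbf{Y},\mathbf{Y}_0)\|_2^2 - \|\boldsymbol{\alpha}(\mathbf{0},\mathbf{X}_0,\mathbf{I},\mathbf{Y}_0)\|_2^2 - \tfrac12\|\boldsymbol{\alpha}(\mathbf{X}_0,\mathbf{X}_0,\mathbf{Y}_0,\mathbf{Y}_0)\|_2^2$,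 which equals the expression above.) *)

From HB Require Import structures.
From mathcomp Require Import all_boot all_order all_algebra.
From mathcomp Require Import complex.
Set Implicit Arguments. Unset Strict Implicit. Unset Printing Implicit Defensive.
Import Order.TTheory GRing.Theory Num.Theory.
Local Open Scope ring_scope.

Section Defs.
Variable R : rcfType.
Local Notation C := (complex R).

Definition conjm m n (A : 'M[C]_(m, n)) : 'M[C]_(m, n) := map_mx (@conjc R) A.
Definition hmx m n (A : 'M[C]_(m, n)) : 'M[C]_(n, m) := (conjm A)^T.
Definition reC (z : C) : R := complex.Re z.
Definition sqmod (z : C) : R := complex.Re z ^+ 2 + complex.Im z ^+ 2.
Definition sqnorm m n (A : 'M[C]_(m, n)) : R := \sum_i \sum_j sqmod (A i j).
Definition diagv n (X : 'M[C]_n) : 'cV[C]_n := \col_i X i i.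
Definition diagm n (v : 'cV[C]_n) : 'M[C]_n := diag_mx v^T.

Definition Omega N M K (a : 'cV[C]_N) (B : 'M[C]_(N, M))
  (X X0 : 'M[C]_N) (Y Y0 : 'M[C]_(M, K)) : R :=
  let A := diagm a in
  let x := diagv X in
  let x0 := diagv X0 in
  let c0 := hmx B *m conjm A *m conjm x0 in
  let c := hmx B *m conjm A *m conjm x in
  let u0 := Y0 *m hmx Y0 *m c0 + c0 in
  let u := Y *m hmx Y0 *m c0 + c in
  reC ((hmx u0 *m u) 0 0)
  - (sqnorm (Y *m hmx Y0 *m c0 - c)) / 2%:R
  - sqnorm (hmx Y0 *m c0)
  - (sqnorm u0) / 2%:R.

End Defs.

(* View C^n as the real Euclidean space R^2n with inner product
   <u, v> = Re (u^H v).  Setting c0 = B^H A^* x0^*, c = B^H A^* x^*, w = Y0^H c0,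
   P = Y w and u0 = Y0 w + c0, the surrogate is
   Omega = <u0, P + c> - |P - c|^2 / 2 - |w|^2 - |u0|^2 / 2.
   Both P and c are real-linear in (x, Y), so Omega is an affine function minus
   a convex quadratic one, hence concave.  For the bound, |a^T X B Y| = |Y^H c|
   and <P, c> = <w, Y^H c>; then 2 <u0, P + c> <= |u0|^2 + |P + c|^2 and
   |P + c|^2 - |P - c|^2 = 4 <w, Y^H c> <= 2 |w|^2 + 2 |Y^H c|^2. *)
From HB Require Import structures.
From mathcomp Require Import all_boot all_order all_algebra.
From mathcomp Require Import complex.
From mathcomp Require Import ring lra.
Set Implicit Arguments. Unset Strict Implicit. Unset Printing Implicit Defensive.
Import Order.TTheory GRing.Theory Num.Theory.
Local Open Scope ring_scope.

Section RealInnerProduct.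
Variable R : rcfType.
Local Notation C := (complex R).
Implicit Types (m n p : nat) (t : R).

Definition rdot m n (A B : 'M[C]_(m, n)) : R :=
  \sum_i \sum_j (complex.Re (A i j) * complex.Re (B i j)
                 + complex.Im (A i j) * complex.Im (B i j)).

Lemma rdotC m n (A B : 'M[C]_(m, n)) : rdot A B = rdot B A.
Proof. by apply: eq_bigr => i _; apply: eq_bigr => j _; ring. Qed.

Lemma rdotDl m n (A B D : 'M[C]_(m, n)) : rdot (A + B) D = rdot A D + rdot B D.
Proof.
rewrite /rdot -big_split; apply: eq_bigr => i _; rewrite -big_split.
apply: eq_bigr => j _; rewrite !mxE.
by case: (A i j) => ? ?; case: (B i j) => ? ? /=; ring.
Qed.

Lemma rdotNl m n (A D : 'M[C]_(m, n)) : rdot (- A) D = - rdot A D.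
Proof.
rewrite /rdot -sumrN; apply: eq_bigr => i _; rewrite -sumrN.
by apply: eq_bigr => j _; rewrite !mxE; case: (A i j) => ? ? /=; ring.
Qed.

Lemma rdotZl m n t (A D : 'M[C]_(m, n)) : rdot (t%:C%C *: A) D = t * rdot A D.
Proof.
rewrite /rdot mulr_sumr; apply: eq_bigr => i _; rewrite mulr_sumr.
by apply: eq_bigr => j _; rewrite !mxE; case: (A i j) => ? ? /=; ring.
Qed.

Lemma rdotDr m n (A B D : 'M[C]_(m, n)) : rdot D (A + B) = rdot D A + rdot D B.
Proof. by rewrite rdotC rdotDl !(rdotC D). Qed.

Lemma rdotNr m n (A D : 'M[C]_(m, n)) : rdot D (- A) = - rdot D A.
Proof. by rewrite rdotC rdotNl rdotC. Qed.

Lemma rdotZr m n t (A D : 'M[C]_(m, n)) : rdot D (t%:C%C *: A) = t * rdot D A.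
Proof. by rewrite rdotC rdotZl rdotC. Qed.

Lemma sqnormE m n (A : 'M[C]_(m, n)) : sqnorm A = rdot A A.
Proof.
by apply: eq_bigr => i _; apply: eq_bigr => j _; rewrite /sqmod !expr2.
Qed.

Lemma sqnorm_ge0 m n (A : 'M[C]_(m, n)) : 0 <= sqnorm A.
Proof.
apply: sumr_ge0 => i _; apply: sumr_ge0 => j _.
by rewrite addr_ge0 ?sqr_ge0.
Qed.

Lemma hmx_rdot m (u v : 'cV[C]_m) : reC ((hmx u *m v) 0 0) = rdot u v.
Proof.
have ReD (x y : C) : complex.Re (x + y) = complex.Re x + complex.Re y by case: x; case: y.
rewrite /reC mxE (big_morph _ ReD (erefl : complex.Re (0 : C) = 0)).
apply: eq_bigr => i _; rewrite big_ord1 !mxE.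
by case: (u i 0) => ? ?; case: (v i 0) => ? ? /=; ring.
Qed.

Lemma conjmM m n p (A : 'M[C]_(m, n)) (B : 'M[C]_(n, p)) :
  conjm (A *m B) = conjm A *m conjm B.
Proof. exact: map_mxM. Qed.

Lemma hmxM m n p (A : 'M[C]_(m, n)) (B : 'M[C]_(n, p)) :
  hmx (A *m B) = hmx B *m hmx A.
Proof. by rewrite /hmx conjmM trmx_mul. Qed.

Lemma rdot_mulmxl m n (Y : 'M[C]_(m, n)) (w : 'cV[C]_n) (c : 'cV[C]_m) :
  rdot (Y *m w) c = rdot w (hmx Y *m c).
Proof. by rewrite -!hmx_rdot hmxM mulmxA. Qed.

Lemma sqnorm_hmx m n (A : 'M[C]_(m, n)) : sqnorm (hmx A) = sqnorm A.
Proof.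
rewrite /sqnorm exchange_big; apply: eq_bigr => i _; apply: eq_bigr => j _.
by rewrite !mxE /sqmod; case: (A i j) => ? ? /=; rewrite sqrrN.
Qed.

Lemma conjmD m n (A B : 'M[C]_(m, n)) : conjm (A + B) = conjm A + conjm B.
Proof. exact: map_mxD. Qed.

Lemma conjmZ_real m n t (A : 'M[C]_(m, n)) :
  conjm (t%:C%C *: A) = t%:C%C *: conjm A.
Proof.
apply/matrixP => i j; rewrite !mxE; case: (A i j) => ? ?.
by apply/eqP; rewrite eq_complex /=; apply/andP; split; apply/eqP; ring.
Qed.

Lemma diagvD n (X1 X2 : 'M[C]_n) : diagv (X1 + X2) = diagv X1 + diagv X2.
Proof. by apply/matrixP => i j; rewrite !mxE. Qed.

Lemma diagvZ n (z : C) (X : 'M[C]_n) : diagv (z *: X) = z *: diagv X.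
Proof. by apply/matrixP => i j; rewrite !mxE. Qed.

Lemma hmx_mul_row_diag n (a : 'cV[C]_n) (X : 'M[C]_n) : is_diag_mx X ->
  hmx (a^T *m X) = conjm (diagm a) *m conjm (diagv X).
Proof.
move=> /is_diag_mxP Xdiag; rewrite -conjmM /hmx /conjm map_trmx; congr map_mx.
apply/matrixP => i j; rewrite /diagm mul_diag_mx !mxE (ord1 j) (bigD1 i) //=.
rewrite big1 ?addr0 ?mxE // => k ki.
by rewrite Xdiag ?mulr0.
Qed.

Lemma sqnorm_convex m n t (D1 D2 : 'M[C]_(m, n)) : 0 <= t <= 1 ->
  sqnorm (t%:C%C *: D1 + (1 - t)%:C%C *: D2)
  <= t * sqnorm D1 + (1 - t) * sqnorm D2.
Proof.
move=> /andP [t_ge0 t_le1]; rewrite !sqnormE.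
(* t |D1|^2 + (1-t) |D2|^2 - |t D1 + (1-t) D2|^2 = t (1-t) |D1 - D2|^2 *)
have t'_ge0 : 0 <= 1 - t by rewrite subr_ge0.
have := mulr_ge0 (mulr_ge0 t_ge0 t'_ge0) (sqnorm_ge0 (D1 - D2)).
rewrite sqnormE !(rdotDl, rdotDr, rdotNl, rdotNr, rdotZl, rdotZr) (rdotC D2 D1).
by nra.
Qed.

End RealInnerProduct.

Section Surrogate.
Variable R : rcfType.
Local Notation C := (complex R).

Definition surrogate m (u0 : 'cV[C]_m) (k : R) (P c : 'cV[C]_m) : R :=
  rdot u0 (P + c) - sqnorm (P - c) / 2%:R - k.

Lemma surrogate_concave m (u0 P1 P2 c1 c2 : 'cV[C]_m) k t : 0 <= t <= 1 ->
  t * surrogate u0 k P1 c1 + (1 - t) * surrogate u0 k P2 c2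
  <= surrogate u0 k (t%:C%C *: P1 + (1 - t)%:C%C *: P2)
                    (t%:C%C *: c1 + (1 - t)%:C%C *: c2).
Proof.
move=> t01; rewrite /surrogate.
have -> : t%:C%C *: P1 + (1 - t)%:C%C *: P2 + (t%:C%C *: c1 + (1 - t)%:C%C *: c2)
          = t%:C%C *: (P1 + c1) + (1 - t)%:C%C *: (P2 + c2).
  by rewrite !scalerDr addrACA.
have -> : t%:C%C *: P1 + (1 - t)%:C%C *: P2 - (t%:C%C *: c1 + (1 - t)%:C%C *: c2)
          = t%:C%C *: (P1 - c1) + (1 - t)%:C%C *: (P2 - c2).
  by rewrite !scalerBr opprD addrACA.
have := sqnorm_convex (P1 - c1) (P2 - c2) t01.
rewrite (rdotDr (t%:C%C *: _)) !rdotZr; lra.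
Qed.

Lemma surrogate_le_sqnorm m n (u0 P c : 'cV[C]_m) (w s : 'cV[C]_n) :
  rdot P c = rdot w s -> surrogate u0 (sqnorm w + sqnorm u0 / 2%:R) P c <= sqnorm s.
Proof.
move=> Pc_ws; rewrite /surrogate.
have := sqnorm_ge0 (s - w); have := sqnorm_ge0 (u0 - (P + c)).
rewrite !sqnormE !(rdotDl, rdotDr, rdotNl, rdotNr).
rewrite (rdotC c P) (rdotC P u0) (rdotC c u0) Pc_ws (rdotC w s); lra.
Qed.

Variables (N M : nat) (a : 'cV[C]_N) (B : 'M[C]_(N, M)).

Definition cvec (X : 'M[C]_N) : 'cV[C]_M :=
  hmx B *m conjm (diagm a) *m conjm (diagv X).

Lemma cvec_comb (t s : R) (X1 X2 : 'M[C]_N) :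
  cvec (t%:C%C *: X1 + s%:C%C *: X2) = t%:C%C *: cvec X1 + s%:C%C *: cvec X2.
Proof.
by rewrite /cvec diagvD !diagvZ conjmD !conjmZ_real mulmxDr -!scalemxAr.
Qed.

Lemma hmx_mul_cvec (X : 'M[C]_N) : is_diag_mx X -> hmx (a^T *m X *m B) = cvec X.
Proof. by move=> Xdiag; rewrite hmxM hmx_mul_row_diag // /cvec mulmxA. Qed.

Variables (K : nat) (X0 : 'M[C]_N) (Y0 : 'M[C]_(M, K)).
Local Notation w := (hmx Y0 *m cvec X0).
Local Notation u0 := (Y0 *m w + cvec X0).

Lemma OmegaE (X : 'M[C]_N) (Y : 'M[C]_(M, K)) :
  Omega a B X X0 Y Y0 = surrogate u0 (sqnorm w + sqnorm u0 / 2%:R) (Y *m w) (cvec X).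
Proof. by rewrite /Omega /surrogate hmx_rdot !mulmxA; lra. Qed.

End Surrogate.

Theorem lemma1 (R : rcfType) (N M K : nat) (hN : (0 < N)%N) (hM : (0 < M)%N)
  (hK : (0 < K)%N) (a : 'cV[complex R]_N) (B : 'M[complex R]_(N, M))
  (X0 : 'M[complex R]_N) (hX0 : is_diag_mx X0) (Y0 : 'M[complex R]_(M, K)) :
  (* joint concavity in (X, Y) over diagonal X, w.r.t. real convex combinations *)
  (forall (X1 X2 : 'M[complex R]_N) (Y1 Y2 : 'M[complex R]_(M, K)) (t : R),
     is_diag_mx X1 -> is_diag_mx X2 -> 0 <= t <= 1 ->
     t * Omega a B X1 X0 Y1 Y0 + (1 - t) * Omega a B X2 X0 Y2 Y0
     <= Omega a B ((t%:C)%C *: X1 + ((1 - t)%:C)%C *: X2) X0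
                  ((t%:C)%C *: Y1 + ((1 - t)%:C)%C *: Y2) Y0)
  /\
  (forall (X : 'M[complex R]_N) (Y : 'M[complex R]_(M, K)), is_diag_mx X ->
     Omega a B X X0 Y Y0 <= sqnorm (a^T *m X *m B *m Y)).
Proof.
split=> [X1 X2 Y1 Y2 t _ _ t01 | X Y Xdiag].
  rewrite !OmegaE cvec_comb mulmxDl -!scalemxAl.
  exact: surrogate_concave.
rewrite OmegaE -(sqnorm_hmx (_ *m Y)) hmxM hmx_mul_cvec //.
apply: surrogate_le_sqnorm.
by rewrite rdot_mulmxl.
Qed.
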